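(* Let $G=K_{1,2,2}$ be the complete 3-partite graph with partite sets $\{x\}$, $\{y_1,y_2\}$, $\{z_1,z_2\}$, and let $L$ be a prime distance labeling of $G$. If $L(x)=0$, then $\{L(y_1),L(y_2),L(z_1),L(z_2)\}=\{2,-2,5,-5\}$ with $L(y_1)=-L(y_2)$ and $L(z_1)=-L(z_2)$. Conversely, if $\{L(y_1),L(y_2),L(z_1),L(z_2)\}=\{2,-2,5,-5\}$ with $L(y_1)=-L(y_2)$ and $L(z_1)=-L(z_2)$, then $L(x)=0$.
   Context: A prime distance labeling of a graph $G$ is an injective map $L:V(G)\to\mathbb{Z}$ such that for every pair of adjacent vertices $u,v$, the integer $|L(u)-L(v)|$ is prime. *)

From mathcomp Require Import all_boot all_order all_algebra.
Set Implicit Arguments. Unset Strict Implicit. Unset Printing Implicit Defensive.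
Import GRing.Theory Num.Theory.

Inductive K122 : Type := vx | vy1 | vy2 | vz1 | vz2.

Definition part (v : K122) : nat :=
  match v with vx => 0 | vy1 | vy2 => 1 | vz1 | vz2 => 2 end.

Definition K122_adj (u v : K122) : Prop := part u <> part v.

Definition prime_distance_labeling (L : K122 -> int) : Prop :=
  injective L /\
  forall u v, K122_adj u v -> prime `|L u - L v|%N.

(** The absolute value of a label difference is prime, hence 2 or odd and at
  least 3; so two adjacent labels of equal parity differ by exactly 2, and if
  n - 2, n, n + 2 are odd with prime absolute values, the one divisible by 3
  is 3 or -3, which leaves n = 5 or n = -5.

  With L(x) = 0 all other labels have prime absolute value. If all four were
  odd, both z-labels would be the two neighbours y1 +- 2 of y1 and of y2, so
  y1 = y2. Hence some label, say L(y1), is 2 or -2; the z-labels are then odd,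
  and a computation with the three-odd-labels fact shows that L(y2) = -L(y1)
  and that both z-labels are 5 or -5.

  Conversely, among c +- 2 and c +- 5 (with c = L(x)) one pair is even, so
  both of its members are 2 or -2, which forces c = 0. *)
From mathcomp Require Import all_boot all_order all_algebra.
From mathcomp Require Import zify.
Set Implicit Arguments.
Unset Strict Implicit.
Import GRing.Theory Num.Theory.
Local Open Scope ring_scope.

(* Everything [lia] needs to know about a prime. *)
Lemma prime_absz_facts (z : int) : prime `|z| ->
  [/\ `|z| = 2 \/ odd `|z|, 1 < `|z| & 3 %| `|z| -> `|z| = 3]%N.
Proof.
move=> pz; split; [exact: even_prime | exact: prime_gt1 |].
by move=> dvd3z; apply/eqP; rewrite eq_sym -dvdn_prime2.
Qed.

Lemma odd_prime_gap (a b : int) :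
  odd `|a| -> odd `|b| -> prime `|a - b| -> a - b = 2 \/ a - b = -2.
Proof. by move=> ? ? /prime_absz_facts[? ? ?]; lia. Qed.

Lemma odd_prime_triple (n : int) : odd `|n| ->
  prime `|n - 2| -> prime `|n| -> prime `|n + 2| -> n = 5 \/ n = -5.
Proof.
by move=> ? /prime_absz_facts[? ? ?] /prime_absz_facts[? ? ?] /prime_absz_facts[? ? ?]; lia.
Qed.

Lemma odd_prime_neighbours (a b1 b2 : int) :
  odd `|a| -> odd `|b1| -> odd `|b2| -> b1 <> b2 ->
  prime `|a - b1| -> prime `|a - b2| ->
  b1 = a - 2 /\ b2 = a + 2 \/ b1 = a + 2 /\ b2 = a - 2.
Proof.
move=> oa ob1 ob2 b12 /(odd_prime_gap oa ob1) ? /(odd_prime_gap oa ob2); lia.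
Qed.

Lemma prime_absz_pm_even (c w : int) : w != 0 -> odd `|c| = odd `|w| ->
  prime `|c - w| -> prime `|c + w| -> c = 0.
Proof.
by move=> ? ? /prime_absz_facts[? ? ?] /prime_absz_facts[? ? ?]; lia.
Qed.

Lemma center_label_zero (c y z : int) :
  y != 0 -> z != 0 -> odd `|y| != odd `|z| ->
  prime `|c - y| -> prime `|c + y| -> prime `|c - z| -> prime `|c + z| -> c = 0.
Proof.
move=> y0 z0 yz pcy pcy' pcz pcz'.
have [cy|cy] := eqVneq (odd `|c|) (odd `|y|); first exact: prime_absz_pm_even pcy pcy'.
apply: prime_absz_pm_even pcz pcz' => //.
by move: cy yz; case: (odd `|c|); case: (odd `|y|); case: (odd `|z|).
Qed.

Lemma odd_next_to_two (a b : int) :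
  `|a|%N = 2%N -> prime `|b| -> prime `|a - b| -> odd `|b|.
Proof. by move=> ? /prime_absz_facts[? ? ?] /prime_absz_facts[? ? ?]; lia. Qed.

Lemma odd_next_to_pm2 (a b : int) : `|a|%N = 2%N -> odd `|b| ->
  prime `|b| -> prime `|a - b| -> prime `|- a - b| -> b = 5 \/ b = -5.
Proof.
move=> a_2 ob pb; rewrite -[`|a - b|%N]abszN -[`|- a - b|%N]abszN !opprB.
have [->|->] : a = 2 \/ a = -2 by lia.
  by move=> pb2 pb2'; apply: odd_prime_triple.
by rewrite opprK => pb2' pb2; apply: odd_prime_triple.
Qed.

Lemma two_not_next_to_odd_triple (a n : int) : `|a|%N = 2%N -> odd `|n| ->
  prime `|n - 2| -> prime `|n| -> prime `|n + 2| ->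
  prime `|a - (n - 2)%R| -> prime `|a - (n + 2)%R| -> False.
Proof.
move=> a_2 odd_n p1 p2 p3 /prime_absz_facts[? ? ?] /prime_absz_facts[? ? ?].
by have := odd_prime_triple odd_n p1 p2 p3; clear odd_n; lia.
Qed.

(* The labels of y1, y2, z1, z2 in a prime distance labeling of K_{1,2,2} with
   L(x) = 0. *)
Definition centered_labels (a1 a2 b1 b2 : int) : Prop :=
  [/\ a1 <> a2, b1 <> b2,
      [/\ prime `|a1|, prime `|a2|, prime `|b1| & prime `|b2|] &
      [/\ prime `|a1 - b1|, prime `|a1 - b2|, prime `|a2 - b1| & prime `|a2 - b2|]].

Lemma centered_labels_swap (a1 a2 b1 b2 : int) :
  centered_labels a1 a2 b1 b2 -> centered_labels a2 a1 b1 b2.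
Proof. by case=> a12 b12 [? ? ? ?] [? ? ? ?]; split=> // a21; apply: a12. Qed.

Lemma centered_labels_sym (a1 a2 b1 b2 : int) :
  centered_labels a1 a2 b1 b2 -> centered_labels b1 b2 a1 a2.
Proof.
by case=> a12 b12 [? ? ? ?] [? ? ? ?]; split=> //; split; rewrite -abszN opprB.
Qed.

Lemma centered_labels_not_all_odd (a1 a2 b1 b2 : int) :
  centered_labels a1 a2 b1 b2 ->
  ~ [/\ odd `|a1|, odd `|a2|, odd `|b1| & odd `|b2|].
Proof.
case=> a12 b12 _ [p11 p12 p21 p22] [oa1 oa2 ob1 ob2].
have := odd_prime_neighbours oa1 ob1 ob2 b12 p11 p12.
have := odd_prime_neighbours oa2 ob1 ob2 b12 p21 p22.
by clear -a12; lia.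
Qed.

Lemma centered_labels_two (a1 a2 b1 b2 : int) :
  centered_labels a1 a2 b1 b2 -> `|a1|%N = 2%N ->
  [/\ a2 = - a1, b2 = - b1 & `|b1|%N = 5%N].
Proof.
case=> a12 b12 [_ pa2 pb1 pb2] [p11 p12 p21 p22] a1_2.
have ob1 := odd_next_to_two a1_2 pb1 p11; have ob2 := odd_next_to_two a1_2 pb2 p12.
have [a2_2 | oa2] := even_prime pa2.
- have a2E : a2 = - a1 by clear -a12 a1_2 a2_2; lia.
  rewrite a2E in p21 p22.
  have b1_5 := odd_next_to_pm2 a1_2 ob1 pb1 p11 p21.
  have b2_5 := odd_next_to_pm2 a1_2 ob2 pb2 p12 p22.
  by split=> //; clear -b1_5 b2_5 b12; lia.
- have [] := odd_prime_neighbours oa2 ob1 ob2 b12 p21 p22 => -[b1E b2E];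
    rewrite b1E b2E in pb1 pb2 p11 p12.
  + by case: (two_not_next_to_odd_triple a1_2 oa2 pb1 pa2 pb2 p11 p12).
  + by case: (two_not_next_to_odd_triple a1_2 oa2 pb2 pa2 pb1 p12 p11).
Qed.

Lemma centered_labels_25 (a1 a2 b1 b2 : int) : centered_labels a1 a2 b1 b2 ->
  [/\ a2 = - a1, b2 = - b1 & (`|a1| = 2 /\ `|b1| = 5 \/ `|a1| = 5 /\ `|b1| = 2)%N].
Proof.
move=> h; have [_ _ [pa1 pa2 pb1 pb2] _] := h.
have [a1_2|oa1] := even_prime pa1.
  by have [-> -> b1_5] := centered_labels_two h a1_2; split=> //; left.
have [a2_2|oa2] := even_prime pa2.
  have [-> -> b1_5] := centered_labels_two (centered_labels_swap h) a2_2.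
  by rewrite opprK abszN; split=> //; left.
have [b1_2|ob1] := even_prime pb1.
  by have [-> -> a1_5] := centered_labels_two (centered_labels_sym h) b1_2; split=> //; right.
have [b2_2|ob2] := even_prime pb2.
  have [-> -> a1_5] := centered_labels_two (centered_labels_swap (centered_labels_sym h)) b2_2.
  by rewrite opprK abszN; split=> //; right.
by case: (centered_labels_not_all_odd h).
Qed.

Lemma signed_labels_25P (a1 a2 b1 b2 : int) :
  [:: a1; a2; b1; b2] =i [:: 2; -2; 5; -5] /\ a1 = - a2 /\ b1 = - b2 <->
  [/\ a2 = - a1, b2 = - b1 & (`|a1| = 2 /\ `|b1| = 5 \/ `|a1| = 5 /\ `|b1| = 2)%N].
Proof.
split=> [[mem [a1E b1E]] | [-> -> ab]].
- have m2 : 2 \in [:: a1; a2; b1; b2] by rewrite mem !inE.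
  have m5 : 5 \in [:: a1; a2; b1; b2] by rewrite mem !inE.
  have ma1 : a1 \in [:: 2; -2; 5; -5] by rewrite -mem mem_head.
  have mb1 : b1 \in [:: 2; -2; 5; -5] by rewrite -mem !inE eqxx !orbT.
  by rewrite !inE in m2 m5 ma1 mb1; clear mem; split; lia.
- rewrite !opprK; split=> //.
  case: ab => -[a1_n b1_m].
  + have a1E : a1 = 2 \/ a1 = -2 by lia.
    have b1E : b1 = 5 \/ b1 = -5 by lia.
    by case: a1E b1E => -> [] ->; apply: perm_mem.
  + have a1E : a1 = 5 \/ a1 = -5 by lia.
    have b1E : b1 = 2 \/ b1 = -2 by lia.
    by case: a1E b1E => -> [] ->; apply: perm_mem.
Qed.

Theorem mainTheorem5 (L : K122 -> int) :
  prime_distance_labeling L ->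
  (L vx = 0 ->
     [:: L vy1; L vy2; L vz1; L vz2] =i [:: 2; -2; 5; -5] /\
     L vy1 = - L vy2 /\ L vz1 = - L vz2) /\
  (([:: L vy1; L vy2; L vz1; L vz2] =i [:: 2; -2; 5; -5] /\
     L vy1 = - L vy2 /\ L vz1 = - L vz2) -> L vx = 0).
Proof.
case=> L_inj edge.
have L_neq u v : u <> v -> L u <> L v by move=> uv /L_inj.
split=> [Lx0 | /signed_labels_25P[Ly2 Lz2 yz]].
- apply/signed_labels_25P; apply: centered_labels_25.
  have prime_L u : part u <> 0%N -> prime `|L u|.
    by move=> u0; rewrite -[L u]subr0 -Lx0; apply: edge.
  by split; [apply: L_neq | apply: L_neq | split; apply: prime_L | split; apply: edge].
- have y0 : L vy1 != 0 by clear -yz; lia.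
  have z0 : L vz1 != 0 by clear -yz; lia.
  have yz_odd : odd `|L vy1| != odd `|L vz1| by clear -yz; lia.
  apply: (center_label_zero y0 z0 yz_odd (edge vx vy1 _) _ (edge vx vz1 _)) => //.
    by rewrite -[L vy1]opprK -Ly2 edge.
  by rewrite -[L vz1]opprK -Lz2 edge.
Qed.
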